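(* Let $n\ge 0$ be an integer. Then for every real $r$ with $|r|>1$, $$\int_{-1}^1 \frac{U_n(s)(1-s^2)^{\frac{3}{2}}}{(s-r)^3}\,ds = \frac{\pi}{2}\left[(n^2+2n+3)-3(n+1)\frac{|r|}{\sqrt{r^2-1}}\right]\left(r-\frac{|r|}{r}\sqrt{r^2-1}\right)^{n+1}.$$
   Context: $U_k(s)=\frac{\sin((k+1)\cos^{-1}s)}{\sin(\cos^{-1}s)}$ is the Tchebyshev polynomial of the second kind. Since $|r|>1$, the integral is an ordinary (nonsingular) integral. *)

From Stdlib Require Import Reals.
From Coquelicot Require Import Coquelicot.
Open Scope R_scope.

(* Chebyshev polynomial of the second kind, defined as in the paper:
   U_k(s) = sin((k+1) acos s) / sin(acos s).
   (At s = +-1 the denominator is 0; Stdlib's total division gives some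
   value there, which is irrelevant for the integral below since the
   integrand carries the factor (1-s^2)^(3/2) and endpoint values do not
   affect Riemann integrals.) *)
Definition chebU (k : nat) (s : R) : R :=
  sin (INR (k + 1) * acos s) / sin (acos s).

Definition integrand (n : nat) (r s : R) : R :=
  chebU n s * ((1 - s ^ 2) * sqrt (1 - s ^ 2)) / (s - r) ^ 3.

From Stdlib Require Import Reals Lra Lia Psatz.
From Coquelicot Require Import Coquelicot.
Open Scope R_scope.

(* Substituting s = cos t turns the integral into the integral over [0, PI] of
   sin((n+1)t) sin^3 t / (cos t - r)^3.  Write r = (p + 1/p)/2 with 0 < |p| < 1; then
   cos t - r = -D/(2p) with D = 1 - 2 p cos t + p^2 the Poisson denominator.  An explicit
   antiderivative, vanishing at 0 and PI, trades 8 p^2 sin(mt) sin^3 t / D^3 for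
   (3m cos(mt) cos t - (m^2+2) sin(mt) sin t) / D, a combination of cos((m-1)t)/D and
   cos((m+1)t)/D, and the Poisson integrals of cos(kt)/D over [0, PI], equal to
   PI p^k / (1 - p^2), conclude. *)

Lemma continuous_bounded_mult_vanishing (u v : R -> R) (x : R) :
  (forall y, Rabs (u y) <= 1) -> continuous v x -> v x = 0 ->
  continuous (fun y => u y * v y) x.
Proof.
  intros Hu Hv Hvx.
  assert (Habs : continuous (fun y => Rabs (v y)) x) by now apply continuous_Rabs_comp.
  unfold continuous in *. rewrite Hvx, Rabs_R0 in Habs. rewrite Hvx, Rmult_0_r.
  change (filterlim (fun y => u y * v y) (locally x) (Rbar_locally 0)).
  apply (filterlim_le_le (fun y => - Rabs (v y)) _ (fun y => Rabs (v y))).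
  - apply filter_forall; intro y. apply Rabs_le_between.
    rewrite Rabs_mult. pose proof (Hu y). pose proof (Rabs_pos (v y)). nra.
  - rewrite <- Ropp_0. exact (filterlim_comp _ _ _ _ Ropp _ _ _ Habs (filterlim_opp 0)).
  - exact Habs.
Qed.

Lemma is_RInt_lin_comb (f g : R -> R) (a b If Ig c d l : R) :
  is_RInt f a b If -> is_RInt g a b Ig -> l = c * If + d * Ig ->
  is_RInt (fun t => c * f t + d * g t) a b l.
Proof.
  intros Hf Hg ->.
  exact (is_RInt_plus _ _ a b _ _ (is_RInt_scal _ a b c _ Hf) (is_RInt_scal _ a b d _ Hg)).
Qed.

(* [is_RInt_ext] states its side condition in the carrier of a [NormedModule], which
   [ring] and [field] do not recognise as [R]. *)
Lemma is_RInt_ext_R (f g : R -> R) (a b l : R) :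
  (forall x, Rmin a b < x < Rmax a b -> f x = g x) -> is_RInt f a b l -> is_RInt g a b l.
Proof. exact (is_RInt_ext f g a b l). Qed.

Lemma is_RInt_one_0_PI : is_RInt (fun _ => 1) 0 PI PI.
Proof.
  replace PI with (scal (PI - 0) 1) at 2 by (unfold scal; simpl; unfold mult; simpl; ring).
  exact (is_RInt_const 0 PI 1).
Qed.

Lemma sin_INR_mult_PI (k : nat) : sin (INR k * PI) = 0.
Proof.
  induction k as [|k IHk].
  - now rewrite Rmult_0_l, sin_0.
  - rewrite S_INR, Rmult_plus_distr_r, Rmult_1_l, neg_sin, IHk. ring.
Qed.

Lemma is_RInt_cos_INR_mult_0_PI (k : nat) : is_RInt (fun t => cos (INR (S k) * t)) 0 PI 0.
Proof.
  pose proof (sin_INR_mult_PI (S k)) as Hs.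
  assert (Hm : INR (S k) <> 0) by (apply not_0_INR; lia).
  revert Hs Hm. generalize (INR (S k)) as m. intros m Hs Hm.
  replace 0 with (minus (sin (m * PI) / m) (sin (m * 0) / m)) at 2
    by (rewrite Hs, Rmult_0_r, sin_0; unfold minus, plus, opp; simpl; field; exact Hm).
  apply (is_RInt_derive (fun t => sin (m * t) / m)).
  - intros t _. auto_derive; [easy|]. field. exact Hm.
  - intros t _. apply (ex_derive_continuous (fun t => cos (m * t))). auto_derive. easy.
Qed.

Lemma cos_INR_SS_mult (k : nat) (t : R) :
  cos (INR (S (S k)) * t) = 2 * cos (INR (S k) * t) * cos t - cos (INR k * t).
Proof.
  replace (INR (S (S k)) * t) with (INR (S k) * t + t) by (rewrite (S_INR (S k)); ring).
  replace (INR k * t) with (INR (S k) * t - t) by (rewrite (S_INR k); ring).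
  rewrite cos_plus, cos_minus. ring.
Qed.

Definition poisson_den (p t : R) : R := 1 - 2 * p * cos t + p ^ 2.

Lemma poisson_den_gt0 (p t : R) : Rabs p < 1 -> 0 < poisson_den p t.
Proof.
  intros Hp. unfold poisson_den.
  destruct (COS_bound t), (Rabs_def2 _ _ Hp), (Rle_lt_dec 0 p).
  - assert (0 <= p * (1 - cos t)) by (apply Rmult_le_pos; lra). nra.
  - assert (0 <= - p * (1 + cos t)) by (apply Rmult_le_pos; lra). nra.
Qed.

(* [t + 2 atan (p sin t / (1 - p cos t))] is an antiderivative of [(1 - p^2) / D]
   that is continuous on all of [0, PI] since [|p cos t| < 1]. *)
Lemma is_RInt_inv_poisson_den (p : R) : Rabs p < 1 ->
  is_RInt (fun t => / poisson_den p t) 0 PI (PI / (1 - p ^ 2)).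
Proof.
  intros Hp. destruct (Rabs_def2 _ _ Hp).
  assert (Hc : forall t, 0 < 1 - p * cos t).
  { intro t. destruct (COS_bound t).
    assert (Hpc : Rabs (p * cos t) < 1); [|apply Rabs_def2 in Hpc; lra].
    rewrite Rabs_mult. apply (Rle_lt_trans _ (Rabs p)); [|exact Hp].
    rewrite <- (Rmult_1_r (Rabs p)) at 2.
    apply Rmult_le_compat_l; [apply Rabs_pos | apply Rabs_le; lra]. }
  set (F := fun t => (t + 2 * atan (p * sin t / (1 - p * cos t))) / (1 - p ^ 2)).
  replace (PI / (1 - p ^ 2)) with (minus (F PI) (F 0)).
  2:{ unfold F, minus, plus, opp; simpl. rewrite sin_PI, sin_0, !Rmult_0_r, !Rdiv_0_l, atan_0.
      field. nra. }
  apply (is_RInt_derive F).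
  - intros t _. unfold F. pose proof (Hc t). pose proof (poisson_den_gt0 p t Hp).
    unfold poisson_den in *. auto_derive; [lra|].
    pose proof (sin2_cos2 t) as Hsc. unfold Rsqr in Hsc.
    field_simplify_eq; [replace (sin t ^ 2) with (1 - cos t ^ 2) by nra; ring | repeat split; nra].
  - intros t _. apply (ex_derive_continuous (fun u => / poisson_den p u)).
    pose proof (poisson_den_gt0 p t Hp). unfold poisson_den in *. auto_derive. lra.
Qed.

Lemma is_RInt_cos_div_poisson_den (p : R) (k : nat) : Rabs p < 1 ->
  is_RInt (fun t => cos (INR k * t) / poisson_den p t) 0 PI (PI * p ^ k / (1 - p ^ 2)).
Proof.
  intros Hp.
  assert (HD : forall t, poisson_den p t <> 0) by (intro t; apply Rgt_not_eq, poisson_den_gt0, Hp).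
  destruct (Req_dec p 0) as [-> | Hp0].
  { assert (HD0 : forall t, poisson_den 0 t = 1) by (intro t; unfold poisson_den; ring).
    destruct k as [|k].
    - apply (is_RInt_ext_R (fun _ => 1)); [intros t _; rewrite HD0, Rmult_0_l, cos_0; field|].
      replace (PI * 0 ^ 0 / (1 - 0 ^ 2)) with PI by field. exact is_RInt_one_0_PI.
    - apply (is_RInt_ext_R (fun t => cos (INR (S k) * t))); [intros t _; rewrite HD0; field|].
      replace (PI * 0 ^ S k / (1 - 0 ^ 2)) with 0 by (simpl; field).
      apply is_RInt_cos_INR_mult_0_PI. }
  destruct (Rabs_def2 _ _ Hp).
  assert (Hq : 1 - p ^ 2 <> 0) by (intro; nra).
  (* Two-step induction on the recurrence [cos((k+2)t) = 2 cos t cos((k+1)t) - cos(kt)],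
     where [2 p cos t = 1 + p^2 - D] turns [2 cos t / D] into [((1 + p^2) / D - 1) / p]. *)
  assert (Hpair : forall j,
    is_RInt (fun t => cos (INR j * t) / poisson_den p t) 0 PI (PI * p ^ j / (1 - p ^ 2)) /\
    is_RInt (fun t => cos (INR (S j) * t) / poisson_den p t) 0 PI (PI * p ^ S j / (1 - p ^ 2))).
  { induction j as [|j [IHj IHSj]].
    - split.
      + apply (is_RInt_ext_R (fun t => / poisson_den p t)).
        * intros t _. rewrite Rmult_0_l, cos_0. field. apply HD.
        * replace (PI * p ^ 0 / (1 - p ^ 2)) with (PI / (1 - p ^ 2)) by (field; exact Hq).
          now apply is_RInt_inv_poisson_den.
      + apply (is_RInt_ext_R (fun t => (1 + p ^ 2) / (2 * p) * / poisson_den p t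
                                      + - (1 / (2 * p)) * 1)).
        * intros t _. simpl. rewrite Rmult_1_l. specialize (HD t). unfold poisson_den in *.
          field. repeat split; try assumption.
        * apply (is_RInt_lin_comb _ _ _ _ _ _ _ _ _
                   (is_RInt_inv_poisson_den p Hp) is_RInt_one_0_PI).
          field. repeat split; try assumption.
    - split; [exact IHSj|].
      apply (is_RInt_ext_R (fun t => (1 + p ^ 2) / p * (cos (INR (S j) * t) / poisson_den p t)
                                    + 1 * (- (1 / p) * cos (INR (S j) * t)
                                           + -1 * (cos (INR j * t) / poisson_den p t)))).
      + intros t _. rewrite cos_INR_SS_mult. specialize (HD t). unfold poisson_den in *.
        field. repeat split; try assumption.
      + apply (is_RInt_lin_comb _ _ _ _ _ _ _ _ _ IHSj
                 (is_RInt_lin_comb _ _ _ _ _ _ _ _ _ (is_RInt_cos_INR_mult_0_PI j) IHj eq_refl)).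
        rewrite <- !(tech_pow_Rmult p (S j)), <- !(tech_pow_Rmult p j).
        field. repeat split; try assumption. }
  exact (proj1 (Hpair k)).
Qed.

Definition sin3_antideriv (p m t : R) : R :=
  2 * p * (sin (m * t) * sin t ^ 2) / poisson_den p t ^ 2
  + (m * cos (m * t) * sin t + 2 * sin (m * t) * cos t) / poisson_den p t.

Definition sin3_antideriv' (p m t : R) : R :=
  (3 * m * cos (m * t) * cos t - (m ^ 2 + 2) * sin (m * t) * sin t) / poisson_den p t
  - 8 * p ^ 2 * (sin (m * t) * sin t ^ 3 / poisson_den p t ^ 3).

Lemma is_derive_sin3_antideriv (p m t : R) : Rabs p < 1 ->
  is_derive (sin3_antideriv p m) t (sin3_antideriv' p m t).
Proof.
  intros Hp. pose proof (poisson_den_gt0 p t Hp) as HD.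
  unfold sin3_antideriv, sin3_antideriv', poisson_den in *.
  auto_derive; [repeat split; apply Rgt_not_eq; nra|].
  field. apply Rgt_not_eq. nra.
Qed.

Lemma continuous_sin3_antideriv' (p m t : R) : Rabs p < 1 ->
  continuous (sin3_antideriv' p m) t.
Proof.
  intros Hp. pose proof (poisson_den_gt0 p t Hp) as HD.
  apply (ex_derive_continuous (sin3_antideriv' p m)).
  unfold sin3_antideriv', poisson_den in *.
  auto_derive. repeat split; apply Rgt_not_eq; repeat apply Rmult_lt_0_compat; lra.
Qed.

Lemma sin3_antideriv_INR_0_PI (p : R) (k : nat) : Rabs p < 1 ->
  sin3_antideriv p (INR k) PI = sin3_antideriv p (INR k) 0.
Proof.
  intros Hp. pose proof (poisson_den_gt0 p 0 Hp). pose proof (poisson_den_gt0 p PI Hp).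
  unfold sin3_antideriv. rewrite sin_INR_mult_PI, sin_PI, !Rmult_0_r, sin_0.
  field. split; apply Rgt_not_eq; assumption.
Qed.

Lemma is_RInt_sin_mult_sin3_div_poisson_den_cube (p : R) (n : nat) : Rabs p < 1 ->
  is_RInt (fun t => 8 * p ^ 2 * (sin (INR (S n) * t) * sin t ^ 3 / poisson_den p t ^ 3)) 0 PI
    (PI * p ^ n * (INR n * (1 - INR n) + (INR n + 2) * (INR n + 3) * p ^ 2) / (2 * (1 - p ^ 2))).
Proof.
  intros Hp. set (m := INR (S n)).
  assert (Hq : 1 - p ^ 2 <> 0) by (destruct (Rabs_def2 _ _ Hp); intro; nra).
  assert (Hboundary : is_RInt (sin3_antideriv' p m) 0 PI 0).
  { replace 0 with (minus (sin3_antideriv p m PI) (sin3_antideriv p m 0)) at 2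
      by (unfold m; rewrite sin3_antideriv_INR_0_PI by exact Hp; exact (minus_eq_zero _)).
    apply (is_RInt_derive (sin3_antideriv p m)); intros t _.
    - now apply is_derive_sin3_antideriv.
    - now apply continuous_sin3_antideriv'. }
  assert (Hmoments : is_RInt
      (fun t => (3 * m * cos (m * t) * cos t - (m ^ 2 + 2) * sin (m * t) * sin t) / poisson_den p t)
      0 PI ((3 * m - m ^ 2 - 2) / 2 * (PI * p ^ n / (1 - p ^ 2))
            + (3 * m + m ^ 2 + 2) / 2 * (PI * p ^ S (S n) / (1 - p ^ 2)))).
  { apply (is_RInt_ext_R (fun t => (3 * m - m ^ 2 - 2) / 2 * (cos (INR n * t) / poisson_den p t)
                         + (3 * m + m ^ 2 + 2) / 2 * (cos (INR (S (S n)) * t) / poisson_den p t))).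
    - intros t _. pose proof (poisson_den_gt0 p t Hp).
      replace (INR n * t) with (m * t - t) by (unfold m; rewrite S_INR; ring).
      replace (INR (S (S n)) * t) with (m * t + t) by (unfold m; rewrite (S_INR (S n)); ring).
      rewrite cos_minus, cos_plus. field. apply Rgt_not_eq. assumption.
    - apply is_RInt_lin_comb with (1 := is_RInt_cos_div_poisson_den p n Hp)
        (2 := is_RInt_cos_div_poisson_den p (S (S n)) Hp). reflexivity. }
  apply (is_RInt_ext_R (fun t => 1 * ((3 * m * cos (m * t) * cos t
                                      - (m ^ 2 + 2) * sin (m * t) * sin t) / poisson_den p t)
                               + (-1) * sin3_antideriv' p m t)).
  - intros t _. unfold sin3_antideriv'. ring.
  - apply (is_RInt_lin_comb _ _ _ _ _ _ _ _ _ Hmoments Hboundary).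
    unfold m. rewrite !S_INR, <- !(tech_pow_Rmult p (S n)), <- !(tech_pow_Rmult p n).
    field. exact Hq.
Qed.

Lemma cos_sub_joukowski (p t : R) : p <> 0 ->
  cos t - (p ^ 2 + 1) / (2 * p) = - poisson_den p t / (2 * p).
Proof. intros Hp. unfold poisson_den. field. exact Hp. Qed.

Definition joukowski_inv (r : R) : R := r - Rabs r / r * sqrt (r ^ 2 - 1).

Lemma joukowski_inv_spec (r : R) : 1 < Rabs r ->
  let p := joukowski_inv r in
  0 < Rabs p < 1 /\ r = (p ^ 2 + 1) / (2 * p) /\
  Rabs r / sqrt (r ^ 2 - 1) = (1 + p ^ 2) / (1 - p ^ 2).
Proof.
  intros Hr p.
  assert (Hr2 : 1 < r ^ 2) by (rewrite <- (pow2_abs r); nra).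
  assert (Hq : 0 < sqrt (r ^ 2 - 1)) by (apply sqrt_lt_R0; lra).
  assert (Hqq : sqrt (r ^ 2 - 1) * sqrt (r ^ 2 - 1) = r ^ 2 - 1) by (apply sqrt_sqrt; lra).
  set (q := sqrt (r ^ 2 - 1)) in *.
  assert (Ep : p = r - q /\ 1 < r \/ p = r + q /\ r < -1).
  { unfold p, joukowski_inv. fold q. destruct (Rle_lt_dec 0 r) as [Hr0 | Hr0].
    - rewrite Rabs_pos_eq in * by lra. left. split; [field | ]; lra.
    - rewrite Rabs_left in * by lra. right. split; [field | ]; lra. }
  assert (Hpp : p ^ 2 - 2 * r * p + 1 = 0 /\ 0 < Rabs p < 1 /\ Rabs r / q = r / (r - p)).
  { destruct Ep as [[-> Hr0] | [-> Hr0]].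
    - rewrite !Rabs_pos_eq by nra. repeat split; [nra | nra | nra | field; lra].
    - rewrite !Rabs_left by nra. repeat split; [nra | nra | nra | field; lra]. }
  clearbody p. destruct Hpp as (Hpp & Hp & Hratio).
  assert (p <> 0) by (intro E; rewrite E, Rabs_R0 in Hp; lra).
  assert (1 - p ^ 2 <> 0) by (destruct Hp as [_ Hp]; apply Rabs_def2 in Hp; intro; nra).
  repeat split; try apply Hp.
  - field_simplify_eq; [lra | assumption].
  - rewrite Hratio.
    replace r with ((p ^ 2 + 1) / (2 * p)) by (field_simplify_eq; [lra | assumption]).
    field. split; [assumption|]. intro. nra.
Qed.

Lemma is_RInt_cos_subst (f : R -> R) (l : R) :
  (forall s, -1 <= s <= 1 -> continuous f s) ->
  is_RInt (fun t => f (cos t) * sin t) 0 PI l -> is_RInt f (-1) 1 l.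
Proof.
  intros Hf Hl.
  assert (Hcomp : is_RInt (fun t => scal (- sin t) (f (cos t))) 0 PI (RInt f 1 (-1))).
  { rewrite <- cos_0, <- cos_PI. apply (is_RInt_comp f cos (fun t => - sin t)); intros t _.
    - apply Hf, COS_bound.
    - split; [auto_derive; [easy | ring] |].
      apply (ex_derive_continuous (fun t => - sin t)). auto_derive. easy. }
  assert (Hneg : is_RInt (fun t => scal (- sin t) (f (cos t))) 0 PI (- l)).
  { apply (is_RInt_ext_R (fun t => (-1) * (f (cos t) * sin t))).
    - intros t _. change (scal (- sin t) (f (cos t))) with (- sin t * f (cos t)). ring.
    - replace (- l) with (-1 * l) by ring. exact (is_RInt_scal _ 0 PI (-1) l Hl). }
  assert (Hswap : RInt f 1 (-1) = - l)
    by now rewrite <- (is_RInt_unique _ _ _ _ Hcomp), (is_RInt_unique _ _ _ _ Hneg).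
  replace l with (opp (RInt f 1 (-1))) by (rewrite Hswap; unfold opp; simpl; ring).
  apply (is_RInt_swap f), (RInt_correct f), (ex_RInt_continuous f).
  intros s Hs. apply Hf. rewrite Rmin_right, Rmax_left in Hs by lra. exact Hs.
Qed.

Definition integrand_reduced (n : nat) (r s : R) : R :=
  sin (INR (n + 1) * acos s) * ((1 - s ^ 2) / (s - r) ^ 3).

Lemma integrand_eq_reduced (n : nat) (r s : R) : -1 < s < 1 ->
  integrand n r s = integrand_reduced n r s.
Proof.
  intros Hs. unfold integrand, integrand_reduced, chebU.
  rewrite sin_acos by lra.
  assert (Hw : 0 < sqrt (1 - s²)) by (apply sqrt_lt_R0; unfold Rsqr; nra).
  replace (1 - s²) with (1 - s ^ 2) in * by (unfold Rsqr; ring).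
  set (w := sqrt (1 - s ^ 2)) in *. unfold Rdiv.
  transitivity (sin (INR (n + 1) * acos s) * (/ w * w) * ((1 - s ^ 2) * / (s - r) ^ 3)); [ring|].
  rewrite Rinv_l by lra. ring.
Qed.

Lemma continuous_integrand_reduced (n : nat) (r s : R) : 1 < Rabs r -> -1 <= s <= 1 ->
  continuous (integrand_reduced n r) s.
Proof.
  intros Hr Hs.
  assert (Hsr : s - r <> 0) by (intro E; replace r with s in Hr by lra; apply Rabs_le in Hs; lra).
  assert (Hweight : continuous (fun s => (1 - s ^ 2) / (s - r) ^ 3) s).
  { apply (ex_derive_continuous (fun s => (1 - s ^ 2) / (s - r) ^ 3)).
    auto_derive. rewrite Rmult_1_r.
    repeat apply Rmult_integral_contrapositive_currified; exact Hsr. }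
  (* [acos] is only known to be continuous inside (-1, 1); at the endpoints the weight vanishes. *)
  destruct (Req_dec (s ^ 2) 1) as [Hs1 | Hs1].
  - apply continuous_bounded_mult_vanishing; [intro y; apply Rabs_le, SIN_bound | exact Hweight |].
    rewrite Hs1. unfold Rdiv. ring.
  - apply (continuous_mult (fun s => sin (INR (n + 1) * acos s))); [|exact Hweight].
    apply continuous_sin_comp, (continuous_mult (fun _ => INR (n + 1)) acos);
      [apply continuous_const |].
    apply continuity_pt_filterlim, derivable_continuous_pt, derivable_pt_acos.
    split; apply Rnot_le_lt; intro; apply Hs1; nra.
Qed.

Lemma integrand_reduced_cos (n : nat) (r t : R) : 0 <= t <= PI ->
  integrand_reduced n r (cos t) * sin t = sin (INR (S n) * t) * sin t ^ 3 / (cos t - r) ^ 3.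
Proof.
  intros Ht. unfold integrand_reduced.
  rewrite acos_cos, Nat.add_1_r by exact Ht.
  replace (1 - cos t ^ 2) with (sin t ^ 2) by (pose proof (sin2_cos2 t); unfold Rsqr in *; nra).
  unfold Rdiv. ring.
Qed.

Theorem mainTheorem12 (n : nat) (r : R) (hr : 1 < Rabs r) :
  ex_RInt (integrand n r) (-1) 1 /\
  RInt (integrand n r) (-1) 1 =
    PI / 2 *
      ((INR n ^ 2 + 2 * INR n + 3)
        - 3 * INR (n + 1) * (Rabs r / sqrt (r ^ 2 - 1)))
    * (r - Rabs r / r * sqrt (r ^ 2 - 1)) ^ (n + 1).
Proof.
  fold (joukowski_inv r).
  destruct (joukowski_inv_spec r hr) as (Hp & Er & Eratio).
  set (p := joukowski_inv r) in *. clearbody p.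
  assert (Hp0 : p <> 0) by (intro E; rewrite E, Rabs_R0 in Hp; lra).
  set (V := PI * p ^ n * (INR n * (1 - INR n) + (INR n + 2) * (INR n + 3) * p ^ 2)
            / (2 * (1 - p ^ 2))).
  assert (Hint : is_RInt (integrand n r) (-1) 1 (- p * V)).
  { apply (is_RInt_ext_R (integrand_reduced n r)).
    { intros s Hs. rewrite Rmin_left, Rmax_right in Hs by lra.
      symmetry. now apply integrand_eq_reduced. }
    apply is_RInt_cos_subst; [intros s Hs; now apply continuous_integrand_reduced |].
    apply (is_RInt_ext_R
      (fun t => - p * (8 * p ^ 2 * (sin (INR (S n) * t) * sin t ^ 3 / poisson_den p t ^ 3)))).
    - intros t Ht. rewrite Rmin_left, Rmax_right in Ht by (pose proof PI_RGT_0; lra).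
      rewrite integrand_reduced_cos, Er, cos_sub_joukowski by (assumption || lra).
      pose proof (poisson_den_gt0 p t (proj2 Hp)). field. split; [assumption | lra].
    - exact (is_RInt_scal _ 0 PI (- p) _
               (is_RInt_sin_mult_sin3_div_poisson_den_cube p n (proj2 Hp))). }
  split; [exists (- p * V); exact Hint |].
  rewrite (is_RInt_unique _ _ _ _ Hint), Eratio. simpl. unfold V.
  assert (Hq : 1 - p ^ 2 <> 0) by (destruct Hp as [_ Hp]; apply Rabs_def2 in Hp; intro; nra).
  rewrite plus_INR, pow_add. simpl (INR 1). field. contradict Hq. lra.
Qed.
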